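(* Fix a positive integer $n$, a covertness threshold $\delta>0$, and risk budgets $\epsilon_{\text{cov}},\epsilon_{\text{rel}}\in(0,1)$. Let $(\eta,\overline{n}_B)$ be a random pair (with arbitrary joint distribution) taking values in $(0,1)\times[0,\infty)$, and let $c_{\text{cov}}=c_{\text{cov}}(\eta,\overline{n}_B)$ and $R_{\text{ach}}=R_{\text{ach}}(\eta,\overline{n}_B)$ be the induced random variables (defined in the context). Consider the risk-constrained program \[ \max_{q,R}\; T(q,R)=qR \quad\text{s.t.}\quad \mathbb{P}\!\left[q>\tfrac{2\delta}{\sqrt{n}}\,c_{\text{cov}}\right]\le\epsilon_{\text{cov}},\quad \mathbb{P}\!\left[R>R_{\text{ach}}\right]\le\epsilon_{\text{rel}},\quad 0\le q\le 1,\ 0\le R\le 1. \] For a real random variable $X$ define $F_X^{<}(x)=\mathbb{P}[X<x]$ and $Q_X^{<}(\epsilon)=\sup\{x\in\mathbb{R}: F_X^{<}(x)\le\epsilon\}$. Set \[ q_{\max}=\min\!\left\{1,\ \frac{2\delta}{\sqrt{n}}\,Q^{<}_{c_{\text{cov}}}(\epsilon_{\text{cov}})\right\},\qquad R_{\max}=Q^{<}_{R_{\text{ach}}}(\epsilon_{\text{rel}}). \] Then an optimal strategy is $(q^*,R^* )=(q_{\max},R_{\max})$, and the maximum per-use covert throughput is $T^*=q^*R^*=q_{\max}R_{\max}$. This holds for arbitrary distributions of $(\eta,\overline{n}_B)$, including cases where the distributions of $c_{\text{cov}}$ or $R_{\text{ach}}$ have atoms.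
   Context: Definitions: for $\eta\in(0,1)$ and $\overline{n}_B\ge0$, the covertness constant is $c_{\text{cov}}(\eta,\overline{n}_B)=\dfrac{\sqrt{2\eta\overline{n}_B(1+\eta\overline{n}_B)}}{1-\eta}$. The depolarizing probability is $p(\eta,\overline{n}_B)=1-\dfrac{\eta}{[1+(1-\eta)\overline{n}_B]^4}$, with Pauli error vector $\vec p=(1-\tfrac{3p}{4},\tfrac p4,\tfrac p4,\tfrac p4)$ and Shannon entropy $H(\vec p)=-\sum_i p_i\log_2 p_i$ (with $0\log 0=0$). The instantaneous achievable rate is $R_{\text{ach}}(\eta,\overline{n}_B)=(1-H(\vec p(\eta,\overline{n}_B)))^+$, where $(x)^+=\max(x,0)$. Here $q$ is the per-channel-use transmission probability and $R$ is the chosen code rate; all probabilities are over the randomness of $(\eta,\overline{n}_B)$. *)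

From HB Require Import structures.
From mathcomp Require Import all_boot all_order all_algebra.
From mathcomp Require Import all_classical all_reals all_analysis.
Set Implicit Arguments. Unset Strict Implicit. Unset Printing Implicit Defensive.
Import Order.TTheory GRing.Theory Num.Theory.
Import numFieldNormedType.Exports.
Local Open Scope classical_set_scope.
Local Open Scope ring_scope.

Section Defs.
Variable R : realType.

Definition c_cov (eta nB : R) : R :=
  Num.sqrt (2 * eta * nB * (1 + eta * nB)) / (1 - eta).

Definition p_dep (eta nB : R) : R :=
  1 - eta / (1 + (1 - eta) * nB) ^+ 4.

Definition pauli_vec (p : R) : seq R :=
  [:: 1 - 3 * p / 4; p / 4; p / 4; p / 4].

Definition xlog2x (x : R) : R := if x == 0 then 0 else x * (ln x / ln 2).

Definition shannonH (v : seq R) : R := - \sum_(x <- v) xlog2x x.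

Definition R_ach (eta nB : R) : R :=
  Num.max (1 - shannonH (pauli_vec (p_dep eta nB))) 0.

Definition cdf_lt d (T : measurableType d) (P : probability T R)
  (X : T -> R) (x : R) : \bar R := P [set w | X w < x].

Definition quantile_lt d (T : measurableType d) (P : probability T R)
  (X : T -> R) (eps : R) : R :=
  sup [set x : R | (cdf_lt P X x <= eps%:E)%E].

Definition feasible d (T : measurableType d) (P : probability T R)
  (eta nB : T -> R) (n : nat) (delta eps_cov eps_rel : R) (q Rc : R) : Prop :=
  [/\ (P [set w | (q > 2 * delta / Num.sqrt (n%:R) * c_cov (eta w) (nB w))%R]
        <= eps_cov%:E)%E,
      (P [set w | (Rc > R_ach (eta w) (nB w))%R] <= eps_rel%:E)%E,
      (0 <= q <= 1)%R & (0 <= Rc <= 1)%R].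

Definition q_max d (T : measurableType d) (P : probability T R)
  (eta nB : T -> R) (n : nat) (delta eps_cov : R) : R :=
  Num.min 1 (2 * delta / Num.sqrt (n%:R) *
             quantile_lt P (fun w => c_cov (eta w) (nB w)) eps_cov).

Definition R_max d (T : measurableType d) (P : probability T R)
  (eta nB : T -> R) (eps_rel : R) : R :=
  quantile_lt P (fun w => R_ach (eta w) (nB w)) eps_rel.

End Defs.

(* The map x |-> P[X < x] is nondecreasing, left-continuous (continuity of P
   along increasing unions) and tends to 1 at +oo.  Hence for eps < 1 the set
   {x | P[X < x] <= eps} is a ray (-oo, Q] containing its supremum
   Q = Q^<_X(eps), i.e. P[X < x] <= eps iff x <= Q.  The covertness constraint
   thus reads q <= (2 delta / sqrt n) Q^<_{c_cov}(eps_cov) and the reliability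
   constraint R <= Q^<_{R_ach}(eps_rel): the constraints decouple and, q and R
   being nonnegative, q R is maximal when both take their largest feasible
   values.  That R_max <= 1 comes from R_ach <= 1, i.e. from H >= 0. *)

From HB Require Import structures.
From mathcomp Require Import all_boot all_order all_algebra.
From mathcomp Require Import all_classical all_reals all_analysis.
From mathcomp Require Import measurable_realfun lra.
Set Implicit Arguments. Unset Strict Implicit. Unset Printing Implicit Defensive.
Import Order.TTheory GRing.Theory Num.Theory.
Import numFieldNormedType.Exports.
Local Open Scope classical_set_scope.
Local Open Scope ring_scope.

Lemma nondecreasing_measure_bigcup_le d (T : measurableType d)
    (R : realFieldType) (mu : {measure set T -> \bar R}) (F : (set T) ^nat)
    (c : \bar R) :
  (forall n, measurable (F n)) -> nondecreasing_seq F ->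
  (forall n, mu (F n) <= c)%E -> (mu (\bigcup_n F n) <= c)%E.
Proof.
move=> mF ndF Fc.
have mF_cvg := @nondecreasing_cvg_mu _ _ _ mu _ mF
  (bigcup_measurable (fun n _ => mF n)) ndF.
rewrite -(cvg_lim _ mF_cvg) //; apply: lime_le; last exact: nearW.
by apply/cvg_ex; exists (mu (\bigcup_n F n)).
Qed.

Section left_cdf.
Variables (R : realType) (d : measure_display) (T : measurableType d).
Variables (P : probability T R) (X : T -> R).
Hypothesis mX : measurable_fun setT X.

Lemma measurable_sublevel_lt x : measurable [set w | X w < x].
Proof.
have := mX measurableT (measurable_itv `]-oo, x[); rewrite setTI.
by congr measurable; apply/seteqP; split => w /=; rewrite in_itv.
Qed.

Lemma le_cdf_lt x y : x <= y -> (cdf_lt P X x <= cdf_lt P X y)%E.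
Proof.
move=> xy; apply: le_measure; rewrite ?inE; try exact: measurable_sublevel_lt.
by move=> w /= /lt_le_trans; apply.
Qed.

Lemma cdf_lt_le_left_limit x (c : \bar R) :
  (forall y, y < x -> (cdf_lt P X y <= c)%E) -> (cdf_lt P X x <= c)%E.
Proof.
move=> lt_c; rewrite /cdf_lt.
have -> : [set w | X w < x] = \bigcup_k [set w | X w < x - k.+1%:R^-1].
  apply/seteqP; split => w /=.
    by move=> /ltr_add_invr[k Xk]; exists k => //=; rewrite ltrBrDl addrC.
  by move=> [k _ /= Xk]; apply: lt_trans Xk _; rewrite ltrBlDr ltrDl invr_gt0.
apply: nondecreasing_measure_bigcup_le => [k|m k mk|k].
- exact: measurable_sublevel_lt.
- apply/subsetPset => w /= /lt_le_trans; apply.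
  by rewrite lerB // lef_pV2 ?posrE ?ler_nat.
- by apply: lt_c; rewrite ltrBlDr ltrDl invr_gt0.
Qed.

Lemma cdf_lt_ubound_ge1 (c : \bar R) :
  (forall x, cdf_lt P X x <= c)%E -> (1 <= c)%E.
Proof.
move=> le_c; rewrite -(probability_setT P).
have -> : [set: T] = \bigcup_n [set w | X w < n%:R].
  apply/seteqP; split => w // _ /=.
  exists (Num.Def.archi_bound `|X w|) => //=.
  exact: le_lt_trans (ler_norm _) (archi_boundP (normr_ge0 _)).
apply: nondecreasing_measure_bigcup_le => [n|m n mn|n].
- exact: measurable_sublevel_lt.
- by apply/subsetPset => w /= /lt_le_trans; apply; rewrite ler_nat.
- exact: le_c.
Qed.

Lemma measure_pmull_lt k x : 0 < k ->
  P [set w | k * X w < x] = cdf_lt P X (k^-1 * x).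
Proof.
move=> k0; rewrite /cdf_lt; congr (P _).
by apply/seteqP; split => w /=; rewrite ltr_pdivlMl.
Qed.

Variables (a eps : R).
Hypotheses (X_ge : forall w, a <= X w) (eps_ge0 : 0 <= eps) (eps_lt1 : eps < 1).

Lemma cdf_lt_lbound : cdf_lt P X a = 0%E.
Proof.
rewrite /cdf_lt (_ : [set w | X w < a] = set0) ?measure0 //.
by apply/seteqP; split => w //=; rewrite ltNge X_ge.
Qed.

Lemma cdf_lt_le_quantileP x :
  (cdf_lt P X x <= eps%:E)%E <-> x <= quantile_lt P X eps.
Proof.
set S := [set x | (cdf_lt P X x <= eps%:E)%E].
have Sa : S a by rewrite /S /= cdf_lt_lbound lee_fin.
have [b Sb] : exists b, ~ S b.
  apply: contrapT => /forallNP S_all.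
  suff : (1 <= eps%:E)%E by rewrite lee_fin leNgt eps_lt1.
  by apply: cdf_lt_ubound_ge1 => y; apply: contrapT; exact: S_all.
have ub_b : ubound S b.
  move=> s Ss; rewrite leNgt; apply/negP => bs; apply: Sb; rewrite /S /=.
  exact: le_trans (le_cdf_lt (ltW bs)) Ss.
have supS : has_sup S by split; [exists a | exists b].
split => [Sx|xQ]; first exact: sup_upper_bound.
apply: le_trans (le_cdf_lt xQ) _; apply: cdf_lt_le_left_limit => y /sup_gt.
by case => [|s Ss /ltW /le_cdf_lt ys]; [exists a | exact: le_trans ys Ss].
Qed.

Lemma quantile_lt_ge : a <= quantile_lt P X eps.
Proof. by apply/cdf_lt_le_quantileP; rewrite cdf_lt_lbound lee_fin. Qed.

Lemma quantile_lt_le b : (forall w, X w <= b) -> quantile_lt P X eps <= b.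
Proof.
move=> X_le; rewrite leNgt; apply/negP => bQ.
have := (cdf_lt_le_quantileP (quantile_lt P X eps)).2 (lexx _); rewrite /cdf_lt.
have -> : [set w | X w < quantile_lt P X eps] = setT.
  by apply/seteqP; split => w // _ /=; exact: le_lt_trans (X_le w) bQ.
by rewrite probability_setT lee_fin leNgt eps_lt1.
Qed.

End left_cdf.

Section measurable_real_functions.
Variable R : realType.

Lemma measurable_invr : measurable_fun [set: R] GRing.inv.
Proof.
rewrite -(setvU [set 0]) measurable_funU //; last exact: measurableC.
split; last exact: measurable_fun_set1.
apply: open_continuous_measurable_fun.
  by rewrite openC; apply: compact_closed; [exact: Rhausdorff | exact: compact_set1].
by move=> x; rewrite inE => /eqP x0; exact: inv_continuous.
Qed.

Lemma measurable_sqrtr : measurable_fun [set: R] Num.sqrt.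
Proof. exact: continuous_measurable_fun (@sqrt_continuous R). Qed.

Lemma measurable_xlog2x : measurable_fun [set: R] (@xlog2x R).
Proof.
have -> : @xlog2x R = (fun x : R => x * (ln x / ln 2)).
  by apply/funext => x; rewrite /xlog2x; case: eqP => // ->; rewrite mul0r.
by apply: measurable_funM => //; exact: measurable_funM.
Qed.

Variables (d : measure_display) (T : measurableType d) (g : T -> R).
Hypothesis mg : measurable_fun setT g.

Lemma measurable_funV : measurable_fun setT (fun w => (g w)^-1).
Proof. exact: measurableT_comp measurable_invr mg. Qed.

Lemma measurable_fun_sqrtr : measurable_fun setT (fun w => Num.sqrt (g w)).
Proof. exact: measurableT_comp measurable_sqrtr mg. Qed.

Lemma measurable_fun_xlog2x : measurable_fun setT (fun w => xlog2x (g w)).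
Proof. exact: measurableT_comp measurable_xlog2x mg. Qed.

End measurable_real_functions.

Local Ltac measurable_arith := repeat first
  [ assumption | exact: measurable_cst
  | apply: measurable_funM | apply: measurable_funD | apply: measurable_funB
  | apply: measurable_funN | apply: measurable_funX | apply: measurable_maxr
  | apply: measurable_funV | apply: measurable_fun_sqrtr
  | apply: measurable_fun_xlog2x ].

Section channel_measurability.
Variables (R : realType) (d : measure_display) (T : measurableType d).
Variables (eta nB : T -> R).
Hypotheses (meta : measurable_fun setT eta) (mnB : measurable_fun setT nB).

Lemma measurable_c_cov : measurable_fun setT (fun w => c_cov (eta w) (nB w)).
Proof. by rewrite /c_cov; measurable_arith. Qed.

Lemma measurable_R_ach : measurable_fun setT (fun w => R_ach (eta w) (nB w)).
Proof.
rewrite /R_ach /shannonH /pauli_vec /p_dep.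
under eq_fun do rewrite !big_cons big_nil.
by measurable_arith.
Qed.

End channel_measurability.

Section channel_bounds.
Variable R : realType.
Implicit Types (eta nB p x : R) (v : seq R).

Lemma xlog2x_le0 x : 0 <= x <= 1 -> xlog2x x <= 0.
Proof.
case/andP => x0 x1; rewrite /xlog2x; case: eqP => // _.
rewrite mulr_ge0_le0 // mulr_le0_ge0 ?ln_le0 //.
by rewrite invr_ge0 ltW // ln_gt0 ?ltr1n.
Qed.

Lemma shannonH_ge0 v : (forall x, x \in v -> 0 <= x <= 1) -> 0 <= shannonH v.
Proof.
by move=> v01; rewrite oppr_ge0 big_seq sumr_le0 // => x /v01 /xlog2x_le0.
Qed.

Lemma pauli_vec_in01 p x : 0 <= p <= 1 -> x \in pauli_vec p -> 0 <= x <= 1.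
Proof. by move=> /andP[p0 p1]; rewrite !inE => /or4P[] /eqP ->; lra. Qed.

Lemma p_dep_in01 eta nB : 0 < eta < 1 -> 0 <= nB -> 0 <= p_dep eta nB <= 1.
Proof.
move=> /andP[eta0 eta1] nB0.
set D := (1 + (1 - eta) * nB) ^+ 4.
have D1 : 1 <= D by rewrite exprn_ege1 // lerDl mulr_ge0 // subr_ge0 ltW.
have D0 : 0 < D := lt_le_trans ltr01 D1.
have le_ratio1 : eta / D <= 1.
  by rewrite ler_pdivrMr // mul1r (le_trans (ltW eta1)).
by rewrite /p_dep subr_ge0 le_ratio1 lerBlDr lerDl divr_ge0 // ltW.
Qed.

Lemma R_ach_le1 eta nB : 0 < eta < 1 -> 0 <= nB -> R_ach eta nB <= 1.
Proof.
move=> eta01 nB0; rewrite /R_ach ge_max ler01 andbT gerBl shannonH_ge0 //.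
by move=> x; apply: pauli_vec_in01; exact: p_dep_in01.
Qed.

Lemma c_cov_ge0 eta nB : eta < 1 -> 0 <= c_cov eta nB.
Proof. by move=> eta1; rewrite divr_ge0 ?sqrtr_ge0 // subr_ge0 ltW. Qed.

End channel_bounds.

Theorem theorem1 (R : realType) (d : measure_display) (T : measurableType d)
  (P : probability T R) (eta nB : T -> R)
  (meas_eta : measurable_fun setT eta) (meas_nB : measurable_fun setT nB)
  (range_eta : forall w, 0 < eta w < 1) (range_nB : forall w, 0 <= nB w)
  (n : nat) (n_pos : (0 < n)%N) (delta : R) (delta_pos : 0 < delta)
  (eps_cov eps_rel : R) (heps_cov : 0 < eps_cov < 1) (heps_rel : 0 < eps_rel < 1) :
  feasible P eta nB n delta eps_cov eps_rel
    (q_max P eta nB n delta eps_cov) (R_max P eta nB eps_rel) /\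
  (forall q Rc : R, feasible P eta nB n delta eps_cov eps_rel q Rc ->
     q * Rc <= q_max P eta nB n delta eps_cov * R_max P eta nB eps_rel).
Proof.
case/andP: heps_cov => ec0 ec1; case/andP: heps_rel => er0 er1.
set k := 2 * delta / Num.sqrt n%:R.
have k0 : 0 < k by rewrite divr_gt0 ?mulr_gt0 // sqrtr_gt0 ltr0n.
set C := fun w => c_cov (eta w) (nB w).
set Ra := fun w => R_ach (eta w) (nB w).
have C0 w : 0 <= C w by apply: c_cov_ge0; case/andP: (range_eta w).
have Ra0 w : 0 <= Ra w by rewrite le_max lexx orbT.
have Ra1 w : Ra w <= 1 by exact: R_ach_le1.
have mC : measurable_fun setT C := measurable_c_cov meas_eta meas_nB.
have mRa : measurable_fun setT Ra := measurable_R_ach meas_eta meas_nB.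
set Qc := quantile_lt P C eps_cov.
set Qr := quantile_lt P Ra eps_rel.
have covP q :
    (P [set w | (k * C w < q)%R] <= eps_cov%:E)%E <-> q <= k * Qc.
  rewrite measure_pmull_lt // -ler_pdivrMl //.
  exact (cdf_lt_le_quantileP P mC C0 (ltW ec0) ec1 _).
have relP Rc :
    (P [set w | (Ra w < Rc)%R] <= eps_rel%:E)%E <-> Rc <= Qr.
  exact (cdf_lt_le_quantileP P mRa Ra0 (ltW er0) er1 Rc).
have Qc0 : 0 <= Qc := quantile_lt_ge P mC C0 (ltW ec0) ec1.
have Qr01 : 0 <= Qr <= 1.
  by rewrite (quantile_lt_ge P mRa Ra0) ?(quantile_lt_le P mRa Ra0) ?ltW.
have qmax_le : Num.min 1 (k * Qc) <= k * Qc by rewrite ge_min lexx orbT.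
have qmax01 : 0 <= Num.min 1 (k * Qc) <= 1.
  by rewrite le_min ge_min lexx ler01 mulr_ge0 // ltW.
split; first by split; [exact: (covP _).2 | exact: (relP _).2 | |].
move=> q Rc [/(covP q).1 qQc /(relP Rc).1 RcQr /andP[q0 q1] /andP[Rc0 _]].
by apply: ler_pM => //; rewrite le_min q1.
Qed.
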